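(* Let $A,B,C$ be finite-dimensional complex vector spaces and let $T\in A\otimes B\otimes C$ be nonzero. Then there exists a hyperplane $H_A\subset A^*$ such that $\underline{\mathbf R}(T|_{H_A\times B^*\times C^*})\le\underline{\mathbf R}(T)-1$. Equivalently, there exists a nonzero $a\in A$ such that the image $T'$ of $T$ under the projection $A\otimes B\otimes C\to (A/\langle a\rangle)\otimes B\otimes C$ satisfies $\underline{\mathbf R}(T')\le\underline{\mathbf R}(T)-1$.
   Context: The border rank $\underline{\mathbf R}(T)$ of a tensor $T$ is the smallest $r$ such that $T$ is a limit of tensors that are sums of $r$ rank one tensors $a\otimes b\otimes c$ (i.e. $[T]\in\sigma_r(Seg(\mathbb PA\times\mathbb PB\times\mathbb PC))$). *)

(* complex numbers modelled as pairs of Stdlib reals, since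
   border rank needs limits (topology of C). *)
From Stdlib Require Import Reals.
Open Scope R_scope.

Definition Cplx : Type := (R * R)%type.
Definition C0 : Cplx := (0, 0).
Definition Cadd (z w : Cplx) : Cplx := (fst z + fst w, snd z + snd w).
Definition Cmul (z w : Cplx) : Cplx :=
  (fst z * fst w - snd z * snd w, fst z * snd w + snd z * fst w).

Fixpoint csum (n : nat) (f : nat -> Cplx) : Cplx :=
  match n with
  | O => C0
  | S m => Cadd (csum m f) (f m)
  end.

(* Convergence of a sequence of complex numbers (coordinatewise = in modulus) *)
Definition Ccv (u : nat -> Cplx) (l : Cplx) : Prop :=
  Un_cv (fun n => fst (u n)) (fst l) /\ Un_cv (fun n => snd (u n)) (snd l).

(* A tensor in A (x) B (x) C with dim A = na, dim B = nb, dim C = nc is given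
   by its coordinates T i j k for i < na, j < nb, k < nc (other values are
   irrelevant). *)
Definition tensor : Type := nat -> nat -> nat -> Cplx.

Definition sum_rank_one (r : nat) (a b c : nat -> nat -> Cplx) : tensor :=
  fun i j k => csum r (fun l => Cmul (Cmul (a l i) (b l j)) (c l k)).

Definition border_rank_le (na nb nc : nat) (T : tensor) (r : nat) : Prop :=
  exists a b c : nat -> nat -> nat -> Cplx,
    forall i j k, (i < na)%nat -> (j < nb)%nat -> (k < nc)%nat ->
      Ccv (fun n => sum_rank_one r (a n) (b n) (c n) i j k) (T i j k).

Definition is_border_rank (na nb nc : nat) (T : tensor) (r : nat) : Prop :=
  border_rank_le na nb nc T r /\
  forall s, border_rank_le na nb nc T s -> (r <= s)%nat.

Definition tensor_nonzero (na nb nc : nat) (T : tensor) : Prop :=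
  exists i j k, (i < na)%nat /\ (j < nb)%nat /\ (k < nc)%nat /\ T i j k <> C0.

(* A hyperplane H_A of A^* given by a basis h_0, ..., h_{na-2} of linear
   forms on A (h l i = value of h_l on the i-th basis vector of A):
   na - 1 linearly independent elements of A^*. *)
Definition hyperplane_basis (na : nat) (h : nat -> nat -> Cplx) : Prop :=
  forall cf : nat -> Cplx,
    (forall i, (i < na)%nat -> csum (na - 1) (fun l => Cmul (cf l) (h l i)) = C0) ->
    forall l, (l < na - 1)%nat -> cf l = C0.

(* T restricted to H_A x B^* x C^*, written in the basis h of H_A:
   an element of H_A^* (x) B (x) C, coordinates (l, j, k) with l < na - 1. *)
Definition restrict_A (na : nat) (h : nat -> nat -> Cplx) (T : tensor) : tensor :=
  fun l j k => csum na (fun i => Cmul (h l i) (T i j k)).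

(* Take sequences of sums of r rank-one tensors a_m (x) b_m (x) c_m converging
   to T. After passing to a subsequence, the lines spanned by the last factors
   a_r converge in PA to a line <v>, v <> 0; writing a_r = s * y with y of norm
   one, y converges to v. Linear forms annihilating y, chosen to depend
   continuously on y, kill the last rank-one term exactly, so restricting the
   approximating sums to them gives sums of r - 1 rank-one tensors converging
   to the restriction of T to the hyperplane v^perp of A^*. *)

From Stdlib Require Import Reals Lra Lia ClassicalEpsilon.
Open Scope R_scope.

Lemma Cplx_eq (z w : Cplx) : fst z = fst w -> snd z = snd w -> z = w.
Proof. destruct z, w; simpl; intros; subst; reflexivity. Qed.

Definition Copp (z : Cplx) : Cplx := (- fst z, - snd z).

Definition Cscal (s : R) (z : Cplx) : Cplx := (s * fst z, s * snd z).

Lemma Cmul_eq_C0_l (z w : Cplx) : Cmul z w = C0 -> w <> C0 -> z = C0.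
Proof.
  destruct z as [x y], w as [u v]; unfold Cmul, C0; simpl; intros Hzw Hw.
  injection Hzw; intros Him Hre.
  assert (Hnorm : 0 < u * u + v * v).
  { destruct (Req_dec u 0), (Req_dec v 0); subst;
      [exfalso; exact (Hw eq_refl) | nra | nra | nra]. }
  assert (Ex : x * (u * u + v * v) = 0)
    by (replace (x * (u * u + v * v)) with (u * (x * u - y * v) + v * (x * v + y * u))
          by ring; rewrite Hre, Him; ring).
  assert (Ey : y * (u * u + v * v) = 0)
    by (replace (y * (u * u + v * v)) with (u * (x * v + y * u) - v * (x * u - y * v))
          by ring; rewrite Hre, Him; ring).
  apply Rmult_integral in Ex; apply Rmult_integral in Ey.
  apply Cplx_eq; simpl; lra.
Qed.

Lemma csum_ext (n : nat) (f g : nat -> Cplx) :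
  (forall i, (i < n)%nat -> f i = g i) -> csum n f = csum n g.
Proof.
  induction n; intros H; simpl; [reflexivity|].
  rewrite IHn, H by (intros; try apply H; lia). reflexivity.
Qed.

Lemma csum_add (n : nat) (f g : nat -> Cplx) :
  csum n (fun i => Cadd (f i) (g i)) = Cadd (csum n f) (csum n g).
Proof. induction n; simpl; [|rewrite IHn]; apply Cplx_eq; simpl; ring. Qed.

Lemma csum_mul_l (n : nat) (z : Cplx) (f : nat -> Cplx) :
  Cmul z (csum n f) = csum n (fun i => Cmul z (f i)).
Proof. induction n; simpl; [|rewrite <- IHn]; apply Cplx_eq; simpl; ring. Qed.

Lemma csum_mul_r (n : nat) (z : Cplx) (f : nat -> Cplx) :
  Cmul (csum n f) z = csum n (fun i => Cmul (f i) z).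
Proof. induction n; simpl; [|rewrite <- IHn]; apply Cplx_eq; simpl; ring. Qed.

Lemma csum_swap (n m : nat) (F : nat -> nat -> Cplx) :
  csum n (fun i => csum m (F i)) = csum m (fun l => csum n (fun i => F i l)).
Proof.
  induction n; simpl.
  - induction m; simpl; [reflexivity|]. rewrite <- IHm. apply Cplx_eq; simpl; ring.
  - rewrite IHn, <- csum_add. reflexivity.
Qed.

Lemma csum_zero (n : nat) (f : nat -> Cplx) :
  (forall i, (i < n)%nat -> f i = C0) -> csum n f = C0.
Proof.
  induction n; intros H; simpl; [reflexivity|].
  rewrite IHn, H by (intros; try apply H; lia). apply Cplx_eq; simpl; ring.
Qed.

Lemma csum_delta (n p : nat) (z : Cplx) : (p < n)%nat ->
  csum n (fun i => if Nat.eqb i p then z else C0) = z.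
Proof.
  induction n; intros Hp; simpl; [lia|].
  destruct (Nat.eqb_spec n p) as [->|Hnp].
  - rewrite csum_zero; [apply Cplx_eq; simpl; ring|].
    intros i Hi. destruct (Nat.eqb_spec i p); [lia | reflexivity].
  - rewrite IHn by lia. apply Cplx_eq; simpl; ring.
Qed.

Fixpoint rsum (n : nat) (f : nat -> R) : R :=
  match n with O => 0 | S m => rsum m f + f m end.

Lemma rsum_ge0 (n : nat) (f : nat -> R) :
  (forall i, (i < n)%nat -> 0 <= f i) -> 0 <= rsum n f.
Proof.
  induction n; intros H; simpl; [lra|].
  pose proof (IHn (fun i Hi => H i ltac:(lia))). pose proof (H n ltac:(lia)). lra.
Qed.

Lemma rsum_le (n : nat) (f : nat -> R) (i : nat) :
  (forall i, (i < n)%nat -> 0 <= f i) -> (i < n)%nat -> f i <= rsum n f.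
Proof.
  induction n; intros H Hi; simpl; [lia|].
  pose proof (rsum_ge0 n f (fun j Hj => H j ltac:(lia))).
  destruct (Nat.eq_dec i n) as [->|Hin]; [lra|].
  pose proof (IHn (fun j Hj => H j ltac:(lia)) ltac:(lia)). pose proof (H n ltac:(lia)). lra.
Qed.

Lemma rsum_scal (n : nat) (s : R) (f : nat -> R) :
  rsum n (fun i => s * f i) = s * rsum n f.
Proof. induction n; simpl; [|rewrite IHn]; ring. Qed.

Lemma rsum_pos_exists (n : nat) (f : nat -> R) :
  0 < rsum n f -> exists i, (i < n)%nat /\ f i <> 0.
Proof.
  induction n; simpl; intros H; [lra|].
  destruct (Req_dec (f n) 0) as [Hz|Hz].
  - destruct IHn as [i [Hi Hfi]]; [lra|]. exists i; split; [lia | exact Hfi].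
  - exists n; split; [lia | exact Hz].
Qed.

Lemma Un_cv_const (x : R) : Un_cv (fun _ => x) x.
Proof. intros eps He; exists O; intros; unfold Rdist; rewrite Rminus_diag, Rabs_R0; lra. Qed.

Lemma Un_cv_ext (u w : nat -> R) (l : R) :
  (forall n, u n = w n) -> Un_cv u l -> Un_cv w l.
Proof.
  intros H Hu eps He. destruct (Hu eps He) as [N HN].
  exists N; intros n Hn; rewrite <- H; apply HN; assumption.
Qed.

Lemma Ccv_const (z : Cplx) : Ccv (fun _ => z) z.
Proof. split; apply Un_cv_const. Qed.

Lemma Ccv_unique (u : nat -> Cplx) (l m : Cplx) : Ccv u l -> Ccv u m -> l = m.
Proof.
  intros [H1 H2] [H3 H4].
  apply Cplx_eq; eapply UL_sequence; eassumption.
Qed.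

Lemma Ccv_ext (u w : nat -> Cplx) (l : Cplx) :
  (forall n, u n = w n) -> Ccv u l -> Ccv w l.
Proof.
  intros H [H1 H2]; split; eapply Un_cv_ext; try eassumption; intros n; simpl; rewrite H;
    reflexivity.
Qed.

Lemma Ccv_add (u v : nat -> Cplx) (l m : Cplx) :
  Ccv u l -> Ccv v m -> Ccv (fun n => Cadd (u n) (v n)) (Cadd l m).
Proof. intros [H1 H2] [H3 H4]; split; simpl; apply CV_plus; assumption. Qed.

Lemma Ccv_mul (u v : nat -> Cplx) (l m : Cplx) :
  Ccv u l -> Ccv v m -> Ccv (fun n => Cmul (u n) (v n)) (Cmul l m).
Proof.
  intros [H1 H2] [H3 H4]; split; simpl;
    [apply CV_minus | apply CV_plus]; apply CV_mult; assumption.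
Qed.

Lemma Ccv_opp (u : nat -> Cplx) (l : Cplx) :
  Ccv u l -> Ccv (fun n => Copp (u n)) (Copp l).
Proof. intros [H1 H2]; split; simpl; apply CV_opp; assumption. Qed.

Lemma Ccv_csum (N : nat) (F : nat -> nat -> Cplx) (L : nat -> Cplx) :
  (forall i, (i < N)%nat -> Ccv (fun n => F n i) (L i)) ->
  Ccv (fun n => csum N (F n)) (csum N L).
Proof.
  induction N; intros H; simpl; [apply Ccv_const|].
  apply Ccv_add; [apply IHN; intros|]; apply H; lia.
Qed.

Lemma Un_cv_rsum (N : nat) (F : nat -> nat -> R) (L : nat -> R) :
  (forall i, (i < N)%nat -> Un_cv (fun n => F n i) (L i)) ->
  Un_cv (fun n => rsum N (F n)) (rsum N L).
Proof.
  induction N; intros H; simpl; [apply Un_cv_const|].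
  apply CV_plus; [apply IHN; intros|]; apply H; lia.
Qed.

(** * Subsequences and Bolzano-Weierstrass *)

Definition strict_incr (phi : nat -> nat) : Prop := forall n, (phi n < phi (S n))%nat.

Lemma strict_incr_ge (phi : nat -> nat) : strict_incr phi -> forall n, (n <= phi n)%nat.
Proof. intros H n; induction n; [lia|]. specialize (H n); lia. Qed.

Lemma strict_incr_le (phi : nat -> nat) :
  strict_incr phi -> forall m n, (m <= n)%nat -> (phi m <= phi n)%nat.
Proof. intros H m n Hmn; induction Hmn; [lia|]. specialize (H m0); lia. Qed.

Lemma strict_incr_comp (phi psi : nat -> nat) :
  strict_incr phi -> strict_incr psi -> strict_incr (fun n => phi (psi n)).
Proof.
  intros Hphi Hpsi n.
  pose proof (strict_incr_le phi Hphi (S (psi n)) (psi (S n)) (Hpsi n)).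
  specialize (Hphi (psi n)); lia.
Qed.

Lemma Un_cv_subseq (u : nat -> R) (l : R) (phi : nat -> nat) :
  strict_incr phi -> Un_cv u l -> Un_cv (fun n => u (phi n)) l.
Proof.
  intros Hphi H eps He. destruct (H eps He) as [N HN]. exists N; intros n Hn.
  apply HN. pose proof (strict_incr_ge phi Hphi n); lia.
Qed.

Lemma Ccv_subseq (u : nat -> Cplx) (l : Cplx) (phi : nat -> nat) :
  strict_incr phi -> Ccv u l -> Ccv (fun n => u (phi n)) l.
Proof.
  intros Hphi [H1 H2]; split;
    [apply (Un_cv_subseq (fun n => fst (u n))) | apply (Un_cv_subseq (fun n => snd (u n)))];
    assumption.
Qed.

Lemma strict_incr_select (P : nat -> nat -> Prop) :
  (forall k N, exists p, (N <= p)%nat /\ P k p) ->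
  exists phi, strict_incr phi /\ forall n, P n (phi n).
Proof.
  intros H.
  assert (choice : forall k N, {p | (N <= p)%nat /\ P k p})
    by (intros k N; apply constructive_indefinite_description, H).
  pose (next := fun k N => proj1_sig (choice k N)).
  pose (phi := fix phi (n : nat) : nat :=
         match n with O => next O O | S m => next (S m) (S (phi m)) end).
  exists phi; split.
  - intros n. exact (proj1 (proj2_sig (choice (S n) (S (phi n))))).
  - intros [|n]; [exact (proj2 (proj2_sig (choice O O)))|].
    exact (proj2 (proj2_sig (choice (S n) (S (phi n))))).
Qed.

Lemma Un_cv_bounded_subseq (u : nat -> R) (M : R) :
  (forall n, Rabs (u n) <= M) ->
  exists phi l, strict_incr phi /\ Un_cv (fun n => u (phi n)) l.
Proof.
  intros Hb.
  destruct (Bolzano_Weierstrass u (fun x => - M <= x <= M) (compact_P3 (- M) M))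
    as [l Hl].
  { intros n; specialize (Hb n).
    pose proof (Rle_abs (u n)); pose proof (Rle_abs (- u n)); rewrite Rabs_Ropp in *; lra. }
  destruct (strict_incr_select (fun k p => Rabs (u p - l) < / INR (S k)))
    as [phi [Hphi Hclose]].
  { intros k N.
    assert (Hpos : 0 < / INR (S k)) by (apply Rinv_0_lt_compat, lt_0_INR; lia).
    destruct (Hl (disc l (mkposreal _ Hpos)) N) as [p [Hp Hup]];
      [exists (mkposreal _ Hpos); intros y Hy; exact Hy|].
    exists p; split; assumption. }
  exists phi, l; split; [exact Hphi|].
  intros eps He. destruct (archimed_cor1 eps He) as [K [HK HK0]].
  exists K; intros n Hn. unfold Rdist.
  apply Rlt_trans with (/ INR (S n)); [apply Hclose|].
  apply Rle_lt_trans with (/ INR K); [|exact HK].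
  apply Rinv_le_contravar; [apply lt_0_INR; lia | apply le_INR; lia].
Qed.

Lemma Ccv_bounded_subseq (k : nat) (z : nat -> nat -> Cplx) (M : R) :
  (forall n i, (i < k)%nat -> Rabs (fst (z n i)) <= M /\ Rabs (snd (z n i)) <= M) ->
  exists phi v, strict_incr phi /\
    forall i, (i < k)%nat -> Ccv (fun n => z (phi n) i) (v i).
Proof.
  induction k as [|k IHk]; intros Hb.
  - exists (fun n => n), (fun _ => C0). split; [intros n; lia | intros; lia].
  - destruct IHk as [phi [v [Hphi Hv]]]; [intros; apply Hb; lia|].
    destruct (Un_cv_bounded_subseq (fun n => fst (z (phi n) k)) M)
      as [psi1 [l1 [Hpsi1 Hl1]]]; [intros; apply Hb; lia|].
    destruct (Un_cv_bounded_subseq (fun n => snd (z (phi (psi1 n)) k)) M)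
      as [psi2 [l2 [Hpsi2 Hl2]]]; [intros; apply Hb; lia|].
    exists (fun n => phi (psi1 (psi2 n))),
           (fun i => if Nat.eqb i k then (l1, l2) else v i).
    split; [do 2 (apply strict_incr_comp; [assumption|]); assumption|].
    intros i Hi. destruct (Nat.eqb_spec i k) as [->|Hik].
    + split; [apply (Un_cv_subseq (fun n => fst (z (phi (psi1 n)) k))) |]; assumption.
    + apply (Ccv_subseq (fun n => z (phi n) i)); [apply strict_incr_comp; assumption|].
      apply Hv; lia.
Qed.

Definition cnorm1 (n : nat) (w : nat -> Cplx) : R :=
  rsum n (fun i => Rabs (fst (w i)) + Rabs (snd (w i))).

Lemma cnorm1_ge0 (n : nat) (w : nat -> Cplx) : 0 <= cnorm1 n w.
Proof.
  apply rsum_ge0; intros i _. pose proof (Rabs_pos (fst (w i))); pose proof (Rabs_pos (snd (w i))).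
  lra.
Qed.

Lemma cnorm1_part_le (n : nat) (w : nat -> Cplx) (i : nat) : (i < n)%nat ->
  Rabs (fst (w i)) <= cnorm1 n w /\ Rabs (snd (w i)) <= cnorm1 n w.
Proof.
  intros Hi. pose proof (Rabs_pos (fst (w i))); pose proof (Rabs_pos (snd (w i))).
  assert (Rabs (fst (w i)) + Rabs (snd (w i)) <= cnorm1 n w).
  { apply (rsum_le n (fun i => Rabs (fst (w i)) + Rabs (snd (w i)))); [|exact Hi].
    intros j _; pose proof (Rabs_pos (fst (w j))); pose proof (Rabs_pos (snd (w j))); lra. }
  lra.
Qed.

Lemma Rabs_eq_R0 (x : R) : Rabs x = 0 -> x = 0.
Proof. intros H; destruct (Req_dec x 0) as [Hx|Hx]; [exact Hx | now apply Rabs_no_R0 in Hx]. Qed.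

Lemma cnorm1_eq0 (n : nat) (w : nat -> Cplx) (i : nat) :
  cnorm1 n w = 0 -> (i < n)%nat -> w i = C0.
Proof.
  intros H0 Hi. destruct (cnorm1_part_le n w i Hi) as [Hre Him]. rewrite H0 in Hre, Him.
  pose proof (Rabs_pos (fst (w i))); pose proof (Rabs_pos (snd (w i))).
  apply Cplx_eq; simpl; apply Rabs_eq_R0; lra.
Qed.

Lemma cnorm1_scal (n : nat) (s : R) (w : nat -> Cplx) :
  cnorm1 n (fun i => Cscal s (w i)) = Rabs s * cnorm1 n w.
Proof.
  unfold cnorm1, Cscal; simpl. rewrite <- rsum_scal.
  induction n; simpl; [reflexivity|]. rewrite IHn, !Rabs_mult; ring.
Qed.

Lemma cnorm1_pos_nonzero (n : nat) (w : nat -> Cplx) :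
  0 < cnorm1 n w -> exists i, (i < n)%nat /\ w i <> C0.
Proof.
  intros H. destruct (rsum_pos_exists _ _ H) as [i [Hi Hwi]].
  exists i; split; [exact Hi|]. intros E; apply Hwi; rewrite E; simpl.
  rewrite Rabs_R0; ring.
Qed.

Lemma Un_cv_cnorm1 (n : nat) (y : nat -> nat -> Cplx) (v : nat -> Cplx) :
  (forall i, (i < n)%nat -> Ccv (fun m => y m i) (v i)) ->
  Un_cv (fun m => cnorm1 n (y m)) (cnorm1 n v).
Proof.
  intros Hy. apply Un_cv_rsum. intros i Hi. destruct (Hy i Hi) as [Hre Him].
  apply CV_plus; apply cv_cvabs; assumption.
Qed.

Definition unit0 (i : nat) : Cplx := if Nat.eqb i 0 then (1, 0) else C0.

Lemma cnorm1_unit0 (n : nat) : (0 < n)%nat -> cnorm1 n unit0 = 1.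
Proof.
  intros Hn. destruct n as [|n]; [lia|]. clear Hn.
  induction n; unfold cnorm1 in *; simpl in *.
  - rewrite Rabs_R1, Rabs_R0; ring.
  - rewrite IHn, Rabs_R0; ring.
Qed.

(* The zero vector is normalized to [unit0], so that [normalize] always has norm one. *)
Definition normalize (n : nat) (w : nat -> Cplx) : nat -> Cplx :=
  if Req_dec_T (cnorm1 n w) 0 then unit0 else fun i => Cscal (/ cnorm1 n w) (w i).

Lemma cnorm1_normalize (n : nat) (w : nat -> Cplx) :
  (0 < n)%nat -> cnorm1 n (normalize n w) = 1.
Proof.
  intros Hn. unfold normalize. destruct (Req_dec_T (cnorm1 n w) 0) as [H0|H0].
  - apply cnorm1_unit0, Hn.
  - rewrite cnorm1_scal, Rabs_inv, Rabs_right by apply Rle_ge, cnorm1_ge0.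
    apply Rinv_l, H0.
Qed.

Lemma normalize_spec (n : nat) (w : nat -> Cplx) (i : nat) : (i < n)%nat ->
  w i = Cscal (cnorm1 n w) (normalize n w i).
Proof.
  intros Hi. unfold normalize. destruct (Req_dec_T (cnorm1 n w) 0) as [H0|H0].
  - rewrite (cnorm1_eq0 n w i H0 Hi), H0. apply Cplx_eq; simpl; ring.
  - apply Cplx_eq; simpl; field; exact H0.
Qed.

(* Compactness of projective space: the lines through a sequence of vectors
   have a convergent subsequence. *)
Lemma direction_subseq_cv (na : nat) (x : nat -> nat -> Cplx) : (0 < na)%nat ->
  exists phi s y v, strict_incr phi /\
    (forall n i, (i < na)%nat -> x (phi n) i = Cscal (s n) (y n i)) /\
    (forall i, (i < na)%nat -> Ccv (fun n => y n i) (v i)) /\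
    exists i0, (i0 < na)%nat /\ v i0 <> C0.
Proof.
  intros Hna.
  destruct (Ccv_bounded_subseq na (fun n => normalize na (x n)) 1) as [phi [v [Hphi Hv]]].
  { intros n i Hi. rewrite <- (cnorm1_normalize na (x n) Hna). apply cnorm1_part_le, Hi. }
  exists phi, (fun n => cnorm1 na (x (phi n))), (fun n => normalize na (x (phi n))), v.
  split; [exact Hphi|]. split; [intros; apply normalize_spec; assumption|].
  split; [exact Hv|].
  apply cnorm1_pos_nonzero.
  assert (Hone : Un_cv (fun _ => 1) (cnorm1 na v)).
  { apply (Un_cv_ext (fun n => cnorm1 na (normalize na (x (phi n))))).
    - intros n; apply cnorm1_normalize, Hna.
    - apply Un_cv_cnorm1, Hv. }
  rewrite <- (UL_sequence _ _ _ (Un_cv_const 1) Hone); lra.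
Qed.

(** * Restriction to a hyperplane *)

Definition skip (i0 l : nat) : nat := if Nat.ltb l i0 then l else S l.

Lemma skip_neq (i0 l : nat) : skip i0 l <> i0.
Proof. unfold skip; destruct (Nat.ltb_spec l i0); lia. Qed.

Lemma skip_lt (na i0 l : nat) : (i0 < na)%nat -> (l < na - 1)%nat -> (skip i0 l < na)%nat.
Proof. unfold skip; destruct (Nat.ltb_spec l i0); lia. Qed.

Lemma skip_inj (i0 l l' : nat) : skip i0 l = skip i0 l' -> l = l'.
Proof. unfold skip; destruct (Nat.ltb_spec l i0), (Nat.ltb_spec l' i0); lia. Qed.

(* [annih i0 w l] is the linear form x |-> w_i0 x_(skip i0 l) - w_(skip i0 l) x_i0,
   which vanishes at w; for w_i0 <> 0 these na - 1 forms span w^perp. *)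
Definition annih (i0 : nat) (w : nat -> Cplx) (l i : nat) : Cplx :=
  if Nat.eqb i i0 then Copp (w (skip i0 l))
  else if Nat.eqb i (skip i0 l) then w i0 else C0.

Lemma annih_hyperplane_basis (na i0 : nat) (v : nat -> Cplx) :
  (i0 < na)%nat -> v i0 <> C0 -> hyperplane_basis na (annih i0 v).
Proof.
  intros Hi0 Hv cf Hcf l Hl.
  specialize (Hcf (skip i0 l) (skip_lt na i0 l Hi0 Hl)).
  rewrite (csum_ext _ _ (fun l' => if Nat.eqb l' l then Cmul (cf l) (v i0) else C0))
    in Hcf.
  - rewrite csum_delta in Hcf by exact Hl. exact (Cmul_eq_C0_l _ _ Hcf Hv).
  - intros l' _. unfold annih.
    destruct (Nat.eqb_spec (skip i0 l) i0) as [E|_]; [now apply skip_neq in E|].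
    destruct (Nat.eqb_spec (skip i0 l) (skip i0 l')) as [E|E];
      destruct (Nat.eqb_spec l' l) as [E'|E'].
    + subst; reflexivity.
    + apply skip_inj in E; lia.
    + subst; contradiction.
    + apply Cplx_eq; simpl; ring.
Qed.

Lemma annih_scal_eq0 (na i0 l : nat) (y : nat -> Cplx) (s : R) :
  (i0 < na)%nat -> (l < na - 1)%nat ->
  csum na (fun i => Cmul (annih i0 y l i) (Cscal s (y i))) = C0.
Proof.
  intros Hi0 Hl.
  pose proof (skip_neq i0 l) as Hneq. pose proof (skip_lt na i0 l Hi0 Hl) as Hlt.
  set (q := skip i0 l) in *.
  rewrite (csum_ext _ _ (fun i =>
      Cadd (if Nat.eqb i i0 then Cmul (Copp (y q)) (Cscal s (y i0)) else C0)
           (if Nat.eqb i q then Cmul (y i0) (Cscal s (y q)) else C0))).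
  - rewrite csum_add, !csum_delta by assumption. apply Cplx_eq; simpl; ring.
  - intros i _. unfold annih. fold q. clearbody q.
    destruct (Nat.eqb_spec i i0), (Nat.eqb_spec i q); subst; try lia;
      apply Cplx_eq; simpl; ring.
Qed.

Lemma Ccv_annih (na i0 l i : nat) (y : nat -> nat -> Cplx) (v : nat -> Cplx) :
  (forall i, (i < na)%nat -> Ccv (fun n => y n i) (v i)) ->
  (i0 < na)%nat -> (l < na - 1)%nat ->
  Ccv (fun n => annih i0 (y n) l i) (annih i0 v l i).
Proof.
  intros Hy Hi0 Hl. unfold annih.
  destruct (Nat.eqb i i0); [apply Ccv_opp, Hy, skip_lt; assumption|].
  destruct (Nat.eqb i (skip i0 l)); [apply Hy, Hi0 | apply Ccv_const].
Qed.

Lemma restrict_A_sum_rank_one (na r : nat) (h a b c : nat -> nat -> Cplx) (l j k : nat) :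
  restrict_A na h (sum_rank_one r a b c) l j k =
  sum_rank_one r (fun m l => csum na (fun i => Cmul (h l i) (a m i))) b c l j k.
Proof.
  unfold restrict_A, sum_rank_one.
  rewrite (csum_ext na _ (fun i => csum r (fun m =>
             Cmul (h l i) (Cmul (Cmul (a m i) (b m j)) (c m k)))))
    by (intros; apply csum_mul_l).
  rewrite csum_swap. apply csum_ext; intros m _.
  rewrite !csum_mul_r. apply csum_ext; intros i _. apply Cplx_eq; simpl; ring.
Qed.

Lemma border_rank_le_restrict (na nb nc r : nat) (T : tensor)
    (a b c : nat -> nat -> nat -> Cplx) (phi : nat -> nat)
    (hs : nat -> nat -> nat -> Cplx) (h : nat -> nat -> Cplx) :
  (forall i j k, (i < na)%nat -> (j < nb)%nat -> (k < nc)%nat ->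
     Ccv (fun n => sum_rank_one (S r) (a n) (b n) (c n) i j k) (T i j k)) ->
  strict_incr phi ->
  (forall l i, (l < na - 1)%nat -> (i < na)%nat -> Ccv (fun n => hs n l i) (h l i)) ->
  (forall n l, (l < na - 1)%nat ->
     csum na (fun i => Cmul (hs n l i) (a (phi n) r i)) = C0) ->
  border_rank_le (na - 1) nb nc (restrict_A na h T) r.
Proof.
  intros HT Hphi Hhs Hkill.
  set (a' := fun n m l => csum na (fun i => Cmul (hs n l i) (a (phi n) m i))).
  exists a', (fun n => b (phi n)), (fun n => c (phi n)).
  intros l j k Hl Hj Hk.
  apply (Ccv_ext (fun n => restrict_A na (hs n)
           (sum_rank_one (S r) (a (phi n)) (b (phi n)) (c (phi n))) l j k)).
  - intros n. rewrite restrict_A_sum_rank_one. unfold sum_rank_one, a'.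
    change (csum (S r) ?f) with (Cadd (csum r f) (f r)); cbv beta.
    rewrite Hkill by exact Hl. apply Cplx_eq; simpl; ring.
  - apply Ccv_csum. intros i Hi. apply Ccv_mul; [apply Hhs; assumption|].
    apply (Ccv_subseq (fun n => sum_rank_one (S r) (a n) (b n) (c n) i j k)); auto.
Qed.

Theorem lemma5p2 (na nb nc : nat) (T : tensor) (r : nat) :
  tensor_nonzero na nb nc T ->
  is_border_rank na nb nc T r ->
  exists h : nat -> nat -> Cplx,
    hyperplane_basis na h /\
    border_rank_le (na - 1) nb nc (restrict_A na h T) (r - 1).
Proof.
  intros [i [j [k [Hi [Hj [Hk HT0]]]]]] [[a [b [c HT]]] _].
  destruct r as [|r].
  - exfalso. apply HT0, (Ccv_unique (fun _ => C0)); [exact (HT i j k Hi Hj Hk) | apply Ccv_const].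
  - replace (S r - 1)%nat with r by lia.
    destruct (direction_subseq_cv na (fun n => a n r) ltac:(lia))
      as [phi [s [y [v [Hphi [Hscal [Hy [i0 [Hi0 Hvi0]]]]]]]]].
    exists (annih i0 v). split; [apply annih_hyperplane_basis; assumption|].
    apply (border_rank_le_restrict na nb nc r T a b c phi (fun n => annih i0 (y n)));
      [exact HT | exact Hphi | intros; apply (Ccv_annih na); assumption |].
    intros n l Hl.
    rewrite <- (annih_scal_eq0 na i0 l (y n) (s n) Hi0 Hl).
    apply csum_ext; intros i' Hi'. rewrite Hscal by exact Hi'. reflexivity.
Qed.
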